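(* Let $R$ be a ring and let $P$ be a polygon divided into subpolygons $P^1,\ldots,P^{\kappa+1}$ by the dissection $E=\{(t_1,v_1),(v_1,t_1),\ldots,(t_\kappa,v_\kappa),(v_\kappa,t_\kappa)\}$ for some $\kappa\geqslant0$. For each $\alpha$ let $c^\alpha:\operatorname{diag}P^\alpha\to R^*$ be a frieze, and assume $c^\alpha_{tv}=c^\beta_{tv}$ whenever $(t,v)\in E\cap\operatorname{diag}P^\alpha\cap\operatorname{diag}P^\beta$. Then there exists a unique map $c:\operatorname{diag}P\to R$ such that (i) $c|_{\operatorname{diag}P^\alpha}=c^\alpha$ for each $\alpha$, and (ii) $c$ is a weak frieze with respect to $E$. Moreover, if this $c$ takes all its values in $R^*$, then $c$ is a frieze.
   Context: $R^*$ denotes the invertible elements of $R$. A polygon $P$ is a finite set of at least three vertices with a cyclic ordering (thought of as a convex polygon in the plane); a subpolygon is a subset of at least three vertices with the induced cyclic ordering. $\operatorname{diag}P$ is the set of ordered pairs of distinct vertices (diagonals). A diagonal is an edge if its endpoints are neighbours, otherwise internal. $(i,k)$ and $(j,\ell)$ cross if $i,j,k,\ell$ are pairwise distinct with $i<j<k<\ell$ or $i<\ell<k<j$ cyclically. A dissection is a set of internal diagonals closed under reversal with no two crossing; it divides $P$ into the subpolygons whose edges are diagonals in the dissection or edges of $P$. Write $c_{ik}=c(i,k)$, $c_{xx}=0$. A map $c:\operatorname{diag}P\to R^*$ is a frieze if for all pairwise distinct $i,j,k$: $c_{ij}c_{kj}^{-1}c_{ki}=c_{ik}c_{jk}^{-1}c_{ji}$,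 and whenever $(i,k)$ and $(j,\ell)$ cross: $c_{ik}=c_{ij}c_{\ell j}^{-1}c_{\ell k}+c_{i\ell}c_{j\ell}^{-1}c_{jk}$. A map $c:\operatorname{diag}P\to R$ is a weak frieze with respect to a dissection $D$ if $c_{tv}\in R^*$ for $(t,v)\in D$ and whenever $(i,k)$ crosses $(t,v)$ with $(t,v),(v,t)\in D$, $c_{ik}=c_{it}c_{vt}^{-1}c_{vk}+c_{iv}c_{tv}^{-1}c_{tk}$. *)

(* Polygon P = vertices 'I_n (n >= 3) with the cyclic order
   0 < 1 < ... < n-1 < 0.  Subpolygons are subsets {set 'I_n} with the induced
   cyclic order.  A map on diagonals is a function 'I_n -> 'I_n -> R of which
   only the values at pairs of distinct vertices matter. *)
From HB Require Import structures.
From mathcomp Require Import all_boot all_order all_algebra.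
Set Implicit Arguments. Unset Strict Implicit. Unset Printing Implicit Defensive.
Import Order.TTheory GRing.Theory Num.Theory.
Local Open Scope ring_scope.

Definition cyc3 (a b c : nat) : bool :=
  [|| (a < b < c)%N, (b < c < a)%N | (c < a < b)%N].

Definition cyc4 (a b c d : nat) : bool :=
  [|| (a < b < c)%N && (c < d)%N, (b < c < d)%N && (d < a)%N,
      (c < d < a)%N && (a < b)%N | (d < a < b)%N && (b < c)%N].

Section Polygon.
Variable n : nat.

Definition crossb (i k j l : 'I_n) : bool := cyc4 i j k l || cyc4 i l k j.

Definition neighb (Q : {set 'I_n}) (i j : 'I_n) : bool :=
  [&& i \in Q, j \in Q, i != j &
     [forall x in Q, ~~ cyc3 i x j] || [forall x in Q, ~~ cyc3 j x i]].

Definition edgeP (i j : 'I_n) : bool := neighb [set: 'I_n] i j.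

Definition internal (i j : 'I_n) : bool := (i != j) && ~~ edgeP i j.

Definition dissection (D : {set 'I_n * 'I_n}) : Prop :=
  [/\ forall i j, (i, j) \in D -> internal i j,
      forall i j, (i, j) \in D -> (j, i) \in D &
      forall i k j l, (i, k) \in D -> (j, l) \in D -> ~~ crossb i k j l].

(* Q is one of the subpolygons into which the dissection D divides P:
   its edges are diagonals of D or edges of P, and no diagonal of D is an
   internal diagonal of Q. *)
Definition cell (D : {set 'I_n * 'I_n}) (Q : {set 'I_n}) : Prop :=
  [/\ (3 <= #|Q|)%N,
      forall i j, neighb Q i j -> edgeP i j || ((i, j) \in D) &
      forall i j, i \in Q -> j \in Q -> i != j -> ~~ neighb Q i j ->
        (i, j) \notin D].

Variable R : unitRingType.

Definition frieze (Q : {set 'I_n}) (c : 'I_n -> 'I_n -> R) : Prop :=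
  [/\ forall i j, i \in Q -> j \in Q -> i != j -> c i j \is a GRing.unit,
      forall i j k, i \in Q -> j \in Q -> k \in Q ->
        i != j -> j != k -> i != k ->
        c i j * (c k j)^-1 * c k i = c i k * (c j k)^-1 * c j i &
      forall i j k l, i \in Q -> j \in Q -> k \in Q -> l \in Q ->
        crossb i k j l ->
        c i k = c i j * (c l j)^-1 * c l k + c i l * (c j l)^-1 * c j k].

Definition weak_frieze (D : {set 'I_n * 'I_n}) (c : 'I_n -> 'I_n -> R) : Prop :=
  (forall t v, (t, v) \in D -> c t v \is a GRing.unit) /\
  (forall i k t v, (t, v) \in D -> (v, t) \in D -> crossb i k t v ->
     c i k = c i t * (c v t)^-1 * c v k + c i v * (c t v)^-1 * c t k).

Definition glued (kappa : nat) (E : {set 'I_n * 'I_n})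
  (Pa : 'I_kappa.+1 -> {set 'I_n}) (ca : 'I_kappa.+1 -> 'I_n -> 'I_n -> R)
  (c : 'I_n -> 'I_n -> R) : Prop :=
  (forall a i j, i \in Pa a -> j \in Pa a -> i != j -> c i j = ca a i j) /\
  weak_frieze E c.

End Polygon.

(* The glued map is built, and shown unique, by induction on the number of
   diagonals of [E] crossing a pair [(i, k)]: a pair inside a cell takes the value
   of that cell's frieze, and otherwise the weak frieze relation along any
   crossing diagonal [(t, v)] forces [c i k] in terms of pairs crossed by fewer
   diagonals; two crossing diagonals give the same value because each relation
   can be re-expanded along the other.

   For the frieze property, twisting [c] by the sign [(-1)^[q < p]] turns both
   the triangle and the crossing relations into the single exchange relation
   [d x y = d x j / d l j * d l y + d x l / d j l * d j y] for all [x, y] and all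
   [j != l].  It holds inside a cell, and in general by induction on the number
   of diagonals separating [x, y, j, l]: along a separating diagonal [(t, v)]
   every needed relation involves fewer separations or is the weak frieze
   relation, and the pivot can be moved from [(t, v)] to [(j, l)].

   Statements about the cyclic order of at most six vertices are proved by
   checking all their relative orders. *)

From mathcomp Require Import all_boot all_algebra zify.
Import GRing.Theory.
Set Implicit Arguments. Unset Strict Implicit. Unset Printing Implicit Defensive.

Inductive cform : Type :=
  | CLt of nat & nat | CEq of nat & nat | CNot of cform
  | CAnd of cform & cform | COr of cform & cform | CImp of cform & cform
  | CXor of cform & cform | CIff of cform & cform | CBool of bool.

Fixpoint ceval (e : nat -> nat) (f : cform) : bool :=
  match f with
  | CLt a b => e a < e b
  | CEq a b => e a == e b
  | CNot g => ~~ ceval e g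
  | CAnd g h => ceval e g && ceval e h
  | COr g h => ceval e g || ceval e h
  | CImp g h => ceval e g ==> ceval e h
  | CXor g h => ceval e g (+) ceval e h
  | CIff g h => ceval e g == ceval e h
  | CBool b => b
  end.

Fixpoint cvars (f : cform) : nat :=
  match f with
  | CLt a b | CEq a b => maxn a.+1 b.+1
  | CNot g => cvars g
  | CAnd g h | COr g h | CImp g h | CXor g h | CIff g h => maxn (cvars g) (cvars h)
  | CBool _ => 0
  end.

Lemma ceval_order_invariant e e' f :
  (forall a b, a < cvars f -> b < cvars f ->
     (e a < e b) = (e' a < e' b) /\ (e a == e b) = (e' a == e' b)) ->
  ceval e f = ceval e' f.
Proof.
elim: f => [a b|a b|g IHg|g IHg h IHh|g IHg h IHh|g IHg h IHh|g IHg h IHh|g IHg h IHh|b]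
  /= same //; try by case: (same a b); rewrite ?leq_max ?ltnSn ?orbT.
- by rewrite IHg.
all: by rewrite IHg ?IHh // => a b ag bg; apply: same; rewrite leq_max ?ag ?bg ?orbT.
Qed.

Definition rank (s : seq nat) (x : nat) := count (fun z => z < x) s.

Lemma rank_lt s x y : x \in s -> x < y -> rank s x < rank s y.
Proof.
elim: s => [//|z s IHs]; rewrite inE /= => /orP [/eqP <-|xs] xy.
  rewrite ltnn xy add0n add1n ltnS; apply: sub_count => u /= ux; exact: ltn_trans xy.
rewrite -addnS leq_add ?IHs //; case: ltnP => // zx; by rewrite (ltn_trans zx xy).
Qed.

Lemma rank_mono s x y : x \in s -> y \in s ->
  (x < y) = (rank s x < rank s y) /\ (x == y) = (rank s x == rank s y).
Proof.
move=> xs ys; case: (ltngtP x y) => [xy|yx|->]; last by rewrite ltnn eqxx.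
  by rewrite rank_lt // ltn_eqF // rank_lt.
by rewrite ltnNge ltnW ?rank_lt // gtn_eqF // rank_lt.
Qed.

Lemma rank_lt_size s x : x \in s -> rank s x < size s.
Proof. by move=> xs; rewrite (leq_trans (rank_lt xs (ltnSn x))) ?count_size. Qed.

Fixpoint ccheck (f : cform) (k m : nat) (pre : seq nat) : bool :=
  if m is m'.+1 then all (fun x => ccheck f k m' (rcons pre x)) (iota 0 k)
  else ceval (nth 0 pre) f.

Lemma ccheckP f k m pre : ccheck f k m pre ->
  forall s, size s = m -> all (gtn k) s -> ceval (nth 0 (pre ++ s)) f.
Proof.
elim: m pre => [|m IHm] pre /=; first by move=> ok [|//] _ _; rewrite cats0.
move=> /allP ok [//|x s] [size_s] /= /andP [xk sk].
by rewrite -cat_rcons; apply: IHm; rewrite ?ok ?mem_iota.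
Qed.

(* Only the relative order of the values of [e] matters, and [k] variables
   realise at most [k] ranks. *)
Lemma ccheck_sound f k : ccheck f k k [::] -> cvars f <= k -> forall e, ceval e f.
Proof.
move=> ok fk e; pose s := undup [seq e i | i <- iota 0 k].
have e_s i : i < k -> e i \in s by move=> ik; rewrite mem_undup map_f ?mem_iota.
have size_s : size s <= k by rewrite (leq_trans (size_undup _)) ?size_map ?size_iota.
pose r := [seq rank s (e i) | i <- iota 0 k].
have r_k : all (gtn k) r.
  apply/allP => x /mapP [i]; rewrite mem_iota => /andP [_ ik] ->.
  exact: leq_trans (rank_lt_size (e_s i ik)) size_s.
rewrite -(ceval_order_invariant (e := nth 0 r)).
  by apply: (ccheckP ok) r_k; rewrite size_map size_iota.
move=> i j /leq_trans/(_ fk) ik /leq_trans/(_ fk) jk.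
rewrite !(nth_map 0) ?size_iota // !nth_iota // !add0n.
by have [-> ->] := rank_mono (e_s i ik) (e_s j jk).
Qed.

Ltac add_atom x l :=
  lazymatch l with context [x] => l | _ => constr:(x :: l) end.

Ltac atom_index x l :=
  lazymatch l with
  | x :: _ => constr:(0)
  | _ :: ?l' => let i := atom_index x l' in constr:(i.+1)
  end.

Ltac nat_atom x :=
  lazymatch type of x with nat => x | _ => constr:(nat_of_ord x) end.

Ltac cform_atoms t l :=
  lazymatch t with
  | crossb ?a ?b ?c ?d =>
      let a := nat_atom a in let b := nat_atom b in
      let c := nat_atom c in let d := nat_atom d in
      cform_atoms (cyc4 a c b d || cyc4 a d b c) l
  | cyc4 ?a ?b ?c ?d =>
      let l := add_atom a l in let l := add_atom b l in
      let l := add_atom c l in add_atom d l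
  | cyc3 ?a ?b ?c => let l := add_atom a l in let l := add_atom b l in add_atom c l
  | (?a < ?b)%N => let l := add_atom a l in add_atom b l
  | true => l
  | false => l
  | ~~ ?g => cform_atoms g l
  | ?g && ?h => let l := cform_atoms g l in cform_atoms h l
  | ?g || ?h => let l := cform_atoms g l in cform_atoms h l
  | ?g ==> ?h => let l := cform_atoms g l in cform_atoms h l
  | ?g (+) ?h => let l := cform_atoms g l in cform_atoms h l
  | @eq_op _ ?g ?h =>
      lazymatch type of g with
      | bool => let l := cform_atoms g l in cform_atoms h l
      | _ => let a := nat_atom g in let b := nat_atom h in
             let l := add_atom a l in add_atom b l
      end
  end.

Ltac reify_cform t l :=
  lazymatch t with
  | crossb ?a ?b ?c ?d =>
      let a := nat_atom a in let b := nat_atom b in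
      let c := nat_atom c in let d := nat_atom d in
      reify_cform (cyc4 a c b d || cyc4 a d b c) l
  | cyc4 ?a ?b ?c ?d =>
      let a := atom_index a l in let b := atom_index b l in
      let c := atom_index c l in let d := atom_index d l in
      constr:(COr (CAnd (CAnd (CLt a b) (CLt b c)) (CLt c d))
             (COr (CAnd (CAnd (CLt b c) (CLt c d)) (CLt d a))
             (COr (CAnd (CAnd (CLt c d) (CLt d a)) (CLt a b))
                  (CAnd (CAnd (CLt d a) (CLt a b)) (CLt b c)))))
  | cyc3 ?a ?b ?c =>
      let a := atom_index a l in let b := atom_index b l in
      let c := atom_index c l in
      constr:(COr (CAnd (CLt a b) (CLt b c))
             (COr (CAnd (CLt b c) (CLt c a)) (CAnd (CLt c a) (CLt a b))))
  | (?a < ?b)%N =>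
      let a := atom_index a l in let b := atom_index b l in constr:(CLt a b)
  | true => constr:(CBool true)
  | false => constr:(CBool false)
  | ~~ ?g => let g := reify_cform g l in constr:(CNot g)
  | ?g && ?h => let g := reify_cform g l in let h := reify_cform h l in constr:(CAnd g h)
  | ?g || ?h => let g := reify_cform g l in let h := reify_cform h l in constr:(COr g h)
  | ?g ==> ?h => let g := reify_cform g l in let h := reify_cform h l in constr:(CImp g h)
  | ?g (+) ?h => let g := reify_cform g l in let h := reify_cform h l in constr:(CXor g h)
  | @eq_op _ ?g ?h =>
      lazymatch type of g with
      | bool => let g := reify_cform g l in let h := reify_cform h l in constr:(CIff g h)
      | _ => let a := nat_atom g in let b := nat_atom h in
             let a := atom_index a l in let b := atom_index b l in constr:(CEq a b)
      end
  end.

Ltac implications_to_bool :=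
  lazymatch goal with
  | |- is_true _ -> _ =>
      let h := fresh in move=> h; implications_to_bool; move: h; apply/implyP
  | |- @eq bool _ _ => apply/eqP
  | _ => idtac
  end.

(* Proves a boolean combination of [<], [==], [cyc3], [cyc4] and [crossb] facts
   about naturals or ordinals, stated as a chain of implications, by checking
   every relative order of its atoms. *)
Ltac cyclic_order :=
  cbn [fst snd]; implications_to_bool;
  lazymatch goal with |- is_true ?t =>
    let l := cform_atoms t (@nil nat) in
    let f := reify_cform t l in
    let k := eval compute in (size l) in
    let ok := fresh in
    assert (ok : ccheck f k k [::]) by (vm_compute; reflexivity);
    exact (ccheck_sound ok erefl (nth 0 l))
  end.

Section CyclicOrder.
Variable n : nat.
Implicit Types i j k l p q r x : 'I_n.

Lemma crossb_revl i k j l : crossb i k j l = crossb k i j l.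
Proof. cyclic_order. Qed.

Lemma crossb_revr i k j l : crossb i k j l = crossb i k l j.
Proof. cyclic_order. Qed.

Lemma crossbC i k j l : crossb i k j l = crossb j l i k.
Proof. cyclic_order. Qed.

Lemma crossb_distinct i k j l : crossb i k j l ->
  [&& i != k, i != j, i != l, k != j, k != l & j != l].
Proof. cyclic_order. Qed.

Lemma cyc3_distinct p x q : cyc3 p x q -> [&& p != x, x != q & p != q].
Proof. cyclic_order. Qed.

Lemma cyc3_total p x q : x != p -> x != q -> p != q -> cyc3 p x q || cyc3 q x p.
Proof. cyclic_order. Qed.

Lemma cyc3_crossb p r q x : cyc3 p r q -> cyc3 q x p -> crossb r x p q.
Proof. cyclic_order. Qed.

End CyclicOrder.

(* Steps from [a] forward to [b] around the [n]-gon; [cdist n a a] is [n]. *)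
Definition cdist (n a b : nat) := if a < b then b - a else n + b - a.

Section CyclicDistance.
Variable n : nat.
Implicit Types a b c p q t x : nat.

Lemma cdist_lt a b c : a < n -> b < n -> c < n -> cyc3 a b c -> cdist n a b < cdist n a c.
Proof. rewrite /cdist /cyc3; case: ifP; case: ifP; lia. Qed.

Lemma cdist_inj t a b : t < n -> a < n -> b < n -> a != t -> b != t ->
  cdist n t a = cdist n t b -> a = b.
Proof. rewrite /cdist; case: ifP; case: ifP; lia. Qed.

Lemma cdist_lt_subarc_l a b (a' b' : nat) : a < n -> b < n -> a' < n -> b' < n ->
  cyc3 a' a b' -> cyc3 a b b' || (b == b') -> cdist n a b < cdist n a' b'.
Proof. rewrite /cdist /cyc3; case: ifP; case: ifP; lia. Qed.

Lemma cdist_lt_subarc_r a b (a' b' : nat) : a < n -> b < n -> a' < n -> b' < n ->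
  cyc3 a' b b' -> cyc3 a' a b || (a == a') -> cdist n a b < cdist n a' b'.
Proof. rewrite /cdist /cyc3; case: ifP; case: ifP; lia. Qed.

Lemma cdist_gap t p q : t < n -> p < n -> q < n -> p != t -> q != t ->
  cdist n t q < cdist n t p -> cyc3 p t q.
Proof. rewrite /cdist /cyc3; case: ifP; case: ifP; lia. Qed.

Lemma cdist_between t p q x : t < n -> p < n -> q < n -> x < n -> x != t ->
  p != t -> q != t -> cdist n t q <= cdist n t x -> cdist n t x <= cdist n t p ->
  ~~ cyc3 p x q.
Proof. rewrite /cdist /cyc3; case: ifP; case: ifP; case: ifP; lia. Qed.

End CyclicDistance.

Lemma exists_third (T : finType) (X : {set T}) (p q : T) : 2 < #|X| ->
  exists r, [/\ r \in X, r != p & r != q].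
Proof.
move=> X3; have : 0 < #|X :\ p :\ q|.
  move: X3; rewrite (cardsD1 p X) (cardsD1 q (X :\ p)).
  by have := leq_b1 (p \in X); have := leq_b1 (q \in X :\ p); lia.
by case/card_gt0P => r; rewrite !inE => /and3P [rq rp rX]; exists r.
Qed.

Lemma exists_gap n (Q : {set 'I_n}) (t : 'I_n) : t \notin Q -> 1 < #|Q| ->
  exists p q, [/\ p \in Q, q \in Q, cyc3 p t q & forall x, x \in Q -> ~~ cyc3 p x q].
Proof.
move=> tQ Q2; case/card_gt0P: (ltnW Q2) => x0 x0Q.
have [q qQ qmin] := @arg_minnP _ x0 (mem Q) (cdist n t) x0Q.
have [p pQ pmax] := @arg_maxnP _ x0 (mem Q) (cdist n t) x0Q.
have neq_t x : x \in Q -> nat_of_ord x != t by move=> xQ; apply: contraNneq tQ => /val_inj <-.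
have lt_qp : cdist n t q < cdist n t p.
  rewrite ltn_neqAle qmin // andbT; apply: contraTneq Q2 => eq_qp.
  have Q_q x : x \in Q -> x = q.
    move=> xQ; apply/val_inj/(@cdist_inj n t); rewrite ?ltn_ord ?neq_t //.
    by apply/eqP; rewrite eqn_leq qmin // andbT eq_qp; apply: pmax.
  by rewrite -leqNgt; apply/card_le1_eqP => x y /Q_q -> /Q_q ->.
exists p, q; split => // [|x xQ].
  by apply: cdist_gap lt_qp; rewrite ?ltn_ord ?neq_t.
by apply: cdist_between (qmin _ xQ) (pmax _ xQ); rewrite ?ltn_ord ?neq_t.
Qed.

Lemma edgePn n (p q : 'I_n) : p != q -> ~~ edgeP p q ->
  (exists z : 'I_n, cyc3 p z q) /\ (exists z : 'I_n, cyc3 q z p).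
Proof.
move=> pq; rewrite /edgeP /neighb !inE pq /= negb_or !negb_forall_in.
case/andP => /exists_inP [z _ /negbNE pzq] /exists_inP [r _ /negbNE qrp].
by split; [exists z | exists r].
Qed.

Lemma not_edgeP n (p q z r : 'I_n) : cyc3 p z q -> cyc3 q r p -> ~~ edgeP p q.
Proof.
move=> pzq qrp; apply/negP => /and4P [_ _ _ /orP [] /forall_inP free].
  by move: (free z); rewrite inE pzq => /(_ isT).
by move: (free r); rewrite inE qrp => /(_ isT).
Qed.

Section Dissection.
Variables (n : nat) (E : {set 'I_n * 'I_n}).
Hypothesis dissE : dissection E.
Implicit Types a b i j k l m p q r t v w x y z : 'I_n.

Lemma diss_neq t v : (t, v) \in E -> t != v.
Proof. by case: dissE => internalE _ _ /internalE /andP []. Qed.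

Lemma diss_sym t v : (t, v) \in E -> (v, t) \in E.
Proof. by case: dissE => _ symE _ /symE. Qed.

Lemma diss_nocross i k j l : (i, k) \in E -> (j, l) \in E -> ~~ crossb i k j l.
Proof. by case: dissE => _ _ ncE /ncE /[apply]. Qed.

Lemma cell_gap Q t : cell E Q -> t \notin Q ->
  exists p q, [/\ p \in Q, q \in Q, (p, q) \in E, cyc3 p t q &
     forall x, x \in Q -> ~~ cyc3 p x q].
Proof.
case=> Q3 sideE _ tQ; have [p [q [pQ qQ ptq gap_pq]]] := exists_gap tQ (ltnW Q3).
exists p, q; split => //; have /and3P [_ _ pq] := cyc3_distinct ptq.
have [r [rQ rp rq]] := exists_third p q Q3.
have qrp : cyc3 q r p by move: (cyc3_total rp rq pq); rewrite (negbTE (gap_pq r rQ)).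
have : neighb Q p q by rewrite /neighb pQ qQ pq; apply/orP; left; apply/forall_inP.
by move/sideE; rewrite (negbTE (not_edgeP ptq qrp)).
Qed.

Lemma cell_uncrossed Q i k t v : cell E Q -> i \in Q -> k \in Q -> (t, v) \in E ->
  ~~ crossb i k t v.
Proof.
move=> cellQ iQ kQ tvE; apply: contraT => /negbNE ikx.
have in_Q t' v' : (t', v') \in E -> crossb i k t' v' -> t' \in Q.
  move=> t'v'E ikx'; apply: contraT => t'Q.
  have [p [q [pQ qQ pqE ptq gap_pq]]] := cell_gap cellQ t'Q.
  have : crossb p q t' v' by move: ptq (gap_pq _ iQ) (gap_pq _ kQ) ikx'; cyclic_order.
  by rewrite (negbTE (diss_nocross pqE t'v'E)).
have tQ := in_Q _ _ tvE ikx.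
have vQ : v \in Q by apply: (in_Q v t (diss_sym tvE)); rewrite -crossb_revr.
case: cellQ => _ _ diagE.
have : neighb Q t v by apply: contraT => /(diagE t v tQ vQ (diss_neq tvE)); rewrite tvE.
by case/and4P => _ _ _ /orP [] /forall_inP side; move: (side _ iQ) (side _ kQ) ikx;
  cyclic_order.
Qed.

Lemma cells_share_diag Q1 Q2 i k : cell E Q1 -> cell E Q2 -> Q1 != Q2 ->
  i \in Q1 -> k \in Q1 -> i \in Q2 -> k \in Q2 -> i != k -> (i, k) \in E.
Proof.
wlog [w w1 w2] : Q1 Q2 / exists2 w, w \in Q1 & w \notin Q2.
  move=> wlog c1 c2 Q12 i1 k1 i2 k2.
  case: (boolP (Q1 \subset Q2)) => [s12|/subsetPn w12]; last exact: (wlog Q1 Q2 w12).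
  have /subsetPn w21 : ~~ (Q2 \subset Q1).
    by apply: contra Q12 => s21; rewrite eqEsubset s12 s21.
  by move=> ik; apply: (wlog Q2 Q1); rewrite // eq_sym.
move=> c1 c2 _ i1 k1 i2 k2 ik.
have [p [q [pQ qQ pqE pwq gap_pq]]] := cell_gap c2 w2.
have end_pq y : y \in Q1 -> y \in Q2 -> (y == p) || (y == q).
  move=> y1 y2; apply: contraT; rewrite negb_or => /andP [yp yq].
  have /and3P [_ _ pq] := cyc3_distinct pwq.
  have qyp : cyc3 q y p by move: (cyc3_total yp yq pq); rewrite (negbTE (gap_pq y y2)).
  by rewrite -(negbTE (cell_uncrossed c1 w1 y1 pqE)) cyc3_crossb.
by move: ik; case/orP: (end_pq i i1 i2) => /eqP ->; case/orP: (end_pq k k1 k2) => /eqP ->;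
  rewrite ?eqxx // => _; rewrite diss_sym.
Qed.

Lemma orient_cross z x e : e \in E -> crossb z x e.1 e.2 ->
  exists a b, [/\ (a, b) \in E, cyc3 a z b & cyc3 b x a].
Proof.
case: e => a b /= abE zx.
have : (cyc3 a z b && cyc3 b x a) || (cyc3 b z a && cyc3 a x b) by move: zx; cyclic_order.
by case/orP => /andP [? ?]; [exists a, b | exists b, a; rewrite diss_sym].
Qed.

Definition visible (X : {set 'I_n}) : {set 'I_n} :=
  [set z | [forall x in X, forall e in E, ~~ crossb z x e.1 e.2]].

Definition uncrossed i k := forall e, e \in E -> ~~ crossb i k e.1 e.2.

Lemma uncrossed_sym i k : uncrossed i k -> uncrossed k i.
Proof. by move=> ik e eE; rewrite -crossb_revl ik. Qed.

Lemma uncrossed_refl i : uncrossed i i.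
Proof. by move=> e _; apply: contraTN isT => /crossb_distinct; rewrite eqxx. Qed.

Lemma visibleP (X : {set 'I_n}) z :
  reflect (forall x, x \in X -> uncrossed z x) (z \in visible X).
Proof.
rewrite inE; apply: (iffP forall_inP) => [vis x xX e eE|vis x xX].
  by move/forall_inP: (vis x xX) => /(_ e eE).
by apply/forall_inP => e eE; apply: vis.
Qed.

Section Visible.
Variable X : {set 'I_n}.
Hypothesis X3 : 2 < #|X|.
Hypothesis X_unsep : forall x y, x \in X -> y \in X -> uncrossed x y.

Lemma sub_visible : X \subset visible X.
Proof. by apply/subsetP => x xX; apply/visibleP => y yX; apply: X_unsep. Qed.

Definition cuts_off z (e : 'I_n * 'I_n) :=
  [&& e \in E, cyc3 e.1 z e.2 & [forall y in X, ~~ cyc3 e.1 y e.2]].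

Lemma cuts_offP z a b : reflect
  [/\ (a, b) \in E, cyc3 a z b & forall y, y \in X -> ~~ cyc3 a y b] (cuts_off z (a, b)).
Proof.
apply: (iffP and3P) => [[? ? /forall_inP ?]|[? ? ?]]; split => //; exact/forall_inP.
Qed.

Lemma cuts_off_cross z x a b : (a, b) \in E -> cyc3 a z b -> cyc3 b x a -> x \in X ->
  cuts_off z (a, b).
Proof.
move=> abE azb bxa xX; apply/cuts_offP; split => // y yX.
by apply: contraNN (X_unsep yX xX abE) => ayb; apply: cyc3_crossb ayb bxa.
Qed.

Lemma farthest_cut_visible z a b : cuts_off z (a, b) ->
  (forall e, cuts_off z e -> cdist n e.1 e.2 <= cdist n a b) ->
  (a \in visible X) && (b \in visible X).
Proof.
case/cuts_offP => abE azb free far.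
apply/andP; split; apply/visibleP => x xX e eE; apply/negP => cross;
  have [a' [b' [a'b'E a'_b' b'xa']]] := orient_cross eE cross;
  have nc := diss_nocross abE a'b'E.
  have /andP [a'zb' longer] : cyc3 a' z b' && (cyc3 a b b' || (b == b')).
    by move: nc a'_b' b'xa' azb (free _ xX); cyclic_order.
  have := far _ (cuts_off_cross a'b'E a'zb' b'xa' xX).
  by rewrite leqNgt cdist_lt_subarc_l ?ltn_ord.
have /andP [a'zb' longer] : cyc3 a' z b' && (cyc3 a' a b || (a == a')).
  by move: nc a'_b' b'xa' azb (free _ xX); cyclic_order.
have := far _ (cuts_off_cross a'b'E a'zb' b'xa' xX).
by rewrite leqNgt cdist_lt_subarc_r ?ltn_ord.
Qed.

Lemma visible_gap_diag p q z : p \in visible X -> q \in visible X ->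
  (forall y, y \in visible X -> ~~ cyc3 p y q) -> cyc3 p z q -> (p, q) \in E.
Proof.
move=> pV qV gap_pq pzq.
have [x xX [e eE zx]] : exists2 x, x \in X & exists2 e, e \in E & crossb z x e.1 e.2.
  have : z \notin visible X by apply: contraTN pzq => /gap_pq.
  rewrite inE negb_forall_in => /exists_inP [x xX].
  by rewrite negb_forall_in => /exists_inP [e eE /negbNE zx]; exists x => //; exists e.
have [a0 [b0 [a0b0E a0zb0 b0xa0]]] := orient_cross eE zx.
have [[a b] cut far] := @arg_maxnP _ (a0, b0) (cuts_off z) (fun e => cdist n e.1 e.2)
  (cuts_off_cross a0b0E a0zb0 b0xa0 xX).
have /andP [aV bV] := farthest_cut_visible cut far.
case/cuts_offP: cut => abE azb free.
have [x1 [x1X x1a x1b]] := exists_third a b X3.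
have outside w : w \in visible X -> ~~ cyc3 a w b.
  move=> /visibleP /(_ x1 x1X (a, b) abE); apply: contra => awb.
  by move: awb x1a x1b (free _ x1X); cyclic_order.
suff /andP [/eqP <- /eqP <-] : (a == p) && (b == q) by [].
by move: pzq azb (gap_pq _ aV) (gap_pq _ bV) (outside _ pV) (outside _ qV); cyclic_order.
Qed.

Lemma visible_cell : cell E (visible X).
Proof.
split.
- exact: leq_trans X3 (subset_leq_card sub_visible).
- move=> p q /and4P [pV qV pq /orP [] /forall_inP gap_pq];
    case: (boolP (edgeP p q)) => //= not_pq; have [[z pzq] [r qrp]] := edgePn pq not_pq.
    exact: visible_gap_diag pV qV gap_pq pzq.
  exact/diss_sym/(visible_gap_diag qV pV gap_pq qrp).
- move=> p q pV qV pq; rewrite /neighb pV qV pq /= negb_or !negb_forall_in.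
  case/andP => /exists_inP [r1 r1V /negbNE pr1q] /exists_inP [r2 r2V /negbNE qr2p].
  apply/negP => pqE; have [x [xX xp xq]] := exists_third p q X3.
  case/orP: (cyc3_total xp xq pq) => [pxq|qxp].
    by move/visibleP: r2V => /(_ x xX _ pqE); rewrite /= crossb_revr cyc3_crossb.
  by move/visibleP: r1V => /(_ x xX _ pqE); rewrite /= cyc3_crossb.
Qed.

End Visible.

Lemma uncrossed_apex i k : uncrossed i k -> (exists w, cyc3 i w k) ->
  exists z, [/\ cyc3 i z k, uncrossed i z & uncrossed z k].
Proof.
move=> unc_ik [w0 iw0k].
have [w iwk wmin] := @arg_minnP _ w0 (fun w => cyc3 i w k) (cdist n i) iw0k.
pose F := [pred m : 'I_n | cyc3 i m k && [forall e in E, ~~ crossb i m e.1 e.2]].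
have FP m : reflect (cyc3 i m k /\ uncrossed i m) (F m).
  by apply: (iffP andP) => [[? /forall_inP ?]|[? ?]]; split => //; apply/forall_inP.
have wF : F w.
  apply/FP; split => // e eE; apply/negP => iwx.
  have closer a : cyc3 i a w -> False.
    move=> iaw; have iak : cyc3 i a k by move: iaw iwk; cyclic_order.
    by have := wmin _ iak; rewrite leqNgt cdist_lt ?ltn_ord.
  have : cyc3 i e.1 w || cyc3 i e.2 w by move: iwx; cyclic_order.
  by case/orP => /closer.
have [m mF mmax] := @arg_maxnP _ w F (cdist n i) wF.
case/FP: mF => imk unc_im; exists m; split => // -[a b] abE; apply/negP => /= mkx.
have farther a' : (i, a') \in E -> cyc3 m a' k -> False.
  move=> ia'E ma'k; have a'F : F a'.
    apply/FP; split; first by move: imk ma'k; cyclic_order.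
    by case=> e1 e2 eE; apply: diss_nocross ia'E eE.
  have ima' : cyc3 i m a' by move: imk ma'k; cyclic_order.
  by have := mmax _ a'F; rewrite /= leqNgt cdist_lt ?ltn_ord.
have : ((b == i) && cyc3 m a k) || ((a == i) && cyc3 m b k).
  by move: mkx imk (unc_ik _ abE) (unc_im _ abE); cyclic_order.
case/orP => /andP [/eqP bi]; first by apply: farther; rewrite -bi diss_sym.
by move: abE; rewrite bi => /farther.
Qed.

Lemma cell_of_uncrossed i k : 2 < n -> i != k -> uncrossed i k ->
  exists Q, [/\ cell E Q, i \in Q & k \in Q].
Proof.
move=> n3 ik unc_ik.
have [z [izk unc_iz unc_zk]] :
    exists z, [/\ cyc3 i z k || cyc3 k z i, uncrossed i z & uncrossed z k].
  have [w [_ wi wk]] : exists w, [/\ w \in [set: 'I_n], w != i & w != k].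
    by apply: exists_third; rewrite cardsT card_ord.
  case/orP: (cyc3_total wi wk ik) => [iwk|kwi].
    by have [z [izk ? ?]] := uncrossed_apex unc_ik (ex_intro _ w iwk); exists z; rewrite izk.
  have [z [kzi ? ?]] := uncrossed_apex (uncrossed_sym unc_ik) (ex_intro _ w kwi).
  by exists z; rewrite kzi orbT; split => //; apply: uncrossed_sym.
have [zi zk] : z != i /\ z != k.
  by case/orP: izk => /cyc3_distinct /and3P [? ? ?]; split; rewrite // eq_sym.
pose X := i |: (k |: [set z]).
have X3 : 2 < #|X|.
  by rewrite !cardsU1 cards1 !inE (negbTE ik) eq_sym (negbTE zi) eq_sym (negbTE zk).
have X_unsep x y : x \in X -> y \in X -> uncrossed x y.
  rewrite !inE => /or3P [] /eqP -> /or3P [] /eqP ->;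
  by do ?[exact: uncrossed_refl | exact: uncrossed_sym | assumption].
exists (visible X); split; first exact: visible_cell X3 X_unsep.
all: by apply: (subsetP (sub_visible X_unsep)); rewrite !inE eqxx ?orbT.
Qed.

Definition separates (S : seq 'I_n) (e : 'I_n * 'I_n) :=
  has (fun u => has (fun w => crossb u w e.1 e.2) S) S.

Definition nsep (S : seq 'I_n) := #|[set e in E | separates S e]|.

Lemma separatesP S e :
  reflect (exists u w, [/\ u \in S, w \in S & crossb u w e.1 e.2]) (separates S e).
Proof.
apply: (iffP hasP) => [[u uS /hasP [w wS uw]]|[u [w [uS wS uw]]]]; first by exists u, w.
by exists u => //; apply/hasP; exists w.
Qed.

Lemma separates2 i k a b : separates [:: i; k] (a, b) = crossb i k a b.
Proof. rewrite /separates /=; cyclic_order. Qed.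

Lemma nsep0P S : reflect (forall e, e \in E -> ~~ separates S e) (nsep S == 0).
Proof.
rewrite cards_eq0; apply: (iffP eqP) => [noE e eE|noE].
  by apply: contraFN (in_set0 e); rewrite -noE inE eE.
by apply/setP => e; rewrite !inE; case: (boolP (e \in E)) => //= /noE /negbTE.
Qed.

Lemma nsep2_uncrossed i k : nsep [:: i; k] = 0 -> uncrossed i k.
Proof. by move/eqP/nsep0P => noE [a b] /noE; rewrite separates2. Qed.

Lemma nsep2_diag t v : (t, v) \in E -> nsep [:: t; v] = 0.
Proof.
by move=> tvE; apply/eqP/nsep0P => -[a b] abE; rewrite separates2 crossbC diss_nocross.
Qed.

Lemma nsep2_cell Q i k : cell E Q -> i \in Q -> k \in Q -> nsep [:: i; k] = 0.
Proof.
move=> cellQ iQ kQ; apply/eqP/nsep0P => -[a b] abE.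
by rewrite separates2 (cell_uncrossed cellQ).
Qed.

Lemma nsep_le S : nsep S <= #|E|.
Proof. by apply/subset_leq_card/subsetP => e; rewrite inE => /andP []. Qed.

Lemma separates_lift S t v x a b : (t, v) \in E -> separates S (t, v) -> (a, b) \in E ->
  x \in S -> crossb x t a b -> separates S (a, b).
Proof.
move=> tvE /separatesP [x1 [x2 [x1S x2S x12]]] abE xS xt.
have nc := diss_nocross abE tvE.
have xt' : x != t by case/and3P: (crossb_distinct xt).
have xv : x != v by apply: contraNneq nc => <-; rewrite crossbC crossb_revl.
have [y yS xy] : exists2 y, y \in S & crossb x y t v.
  have : crossb x x1 t v || crossb x x2 t v by move: x12 xt' xv; cyclic_order.
  by case/orP => ?; [exists x1 | exists x2].
by apply/separatesP; exists x, y; split => //; move: xy xt nc; cyclic_order.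
Qed.

Lemma nsep_lt S S' t v : (t, v) \in E -> separates S (t, v) -> ~~ separates S' (t, v) ->
  {subset S' <= [:: t, v & S]} -> nsep S' < nsep S.
Proof.
move=> tvE tvS tvS' sub; apply: proper_card; apply/properP; split; last first.
  by exists (t, v); rewrite !inE tvE ?tvS ?(negbTE tvS').
have vtE := diss_sym tvE; have vtS : separates S (v, t).
  case/separatesP: tvS => u [w [uS wS uw]].
  by apply/separatesP; exists u, w; rewrite -crossb_revr.
apply/subsetP => -[a b]; rewrite !inE => /andP [abE /separatesP [u [w [uS' wS' uw]]]].
rewrite abE /=; have nc := diss_nocross tvE abE.
have {}uw : crossb w u a b by rewrite -crossb_revl.
move: (sub u uS') (sub w wS') uw; rewrite !inE.
case/or3P => [/eqP ->|/eqP ->|uS]; case/or3P => [/eqP ->|/eqP ->|wS] => cross;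
  move: (crossb_distinct cross); rewrite ?eqxx ?andbF // => _.
- by move: cross; rewrite crossb_revl (negbTE nc).
- exact: separates_lift tvE tvS abE wS cross.
- by move: cross; rewrite (negbTE nc).
- exact: separates_lift vtE vtS abE wS cross.
- by apply: separates_lift tvE tvS abE uS _; rewrite crossb_revl.
- by apply: separates_lift vtE vtS abE uS _; rewrite crossb_revl.
- by apply/separatesP; exists w, u.
Qed.

Lemma nsep2_refl x : nsep [:: x; x] = 0.
Proof. by apply/eqP/nsep0P => -[a b] _; rewrite separates2; cyclic_order. Qed.

Lemma nsep2_pos i k t v : (t, v) \in E -> crossb i k t v -> 0 < nsep [:: i; k].
Proof.
by move=> tvE ikx; rewrite lt0n; apply/nsep0P => /(_ _ tvE); rewrite separates2 ikx.
Qed.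

Lemma nsep2_cross i k t v : (t, v) \in E -> crossb i k t v ->
  [/\ nsep [:: i; t] < nsep [:: i; k], nsep [:: i; v] < nsep [:: i; k],
      nsep [:: t; k] < nsep [:: i; k] & nsep [:: v; k] < nsep [:: i; k]].
Proof.
move=> tvE ikx; have sep : separates [:: i; k] (t, v) by rewrite separates2.
split; apply: (nsep_lt tvE sep); rewrite ?separates2; try cyclic_order;
  by move=> u; rewrite !inE => /orP [] ->; rewrite ?orbT.
Qed.

End Dissection.

Local Open Scope ring_scope.

Section Exchange.
Variables (R : unitRingType) (T : eqType).
Implicit Types (d : T -> T -> R) (j l t v x y : T).

Definition exchange_rhs d j l x y :=
  d x j * (d l j)^-1 * d l y + d x l * (d j l)^-1 * d j y.

(* When [(x, y)] crosses [(j, l)] this is the crossing relation of a frieze. *)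
Definition exchange d j l x y := d x y = exchange_rhs d j l x y.

Lemma exchange_rhsC d j l x y : exchange_rhs d j l x y = exchange_rhs d l j x y.
Proof. exact: addrC. Qed.

Lemma exchangeC d j l x y : exchange d j l x y -> exchange d l j x y.
Proof. by rewrite /exchange exchange_rhsC. Qed.

Lemma exchange_degenerate d j l x y : d j j = 0 -> d l l = 0 ->
  d j l \is a GRing.unit -> d l j \is a GRing.unit ->
  [|| x == j, x == l, y == j | y == l] -> exchange d j l x y.
Proof.
move=> djj dll ujl ulj; rewrite /exchange /exchange_rhs.
case/or4P => /eqP ->; rewrite ?djj ?dll ?(mul0r, mulr0, add0r, addr0).
- by rewrite mulrV ?mul1r.
- by rewrite mulrV ?mul1r.
- by rewrite mulrVK.
- by rewrite mulrVK.
Qed.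

Lemma exchange_expandl d t v j l x y : exchange d t v x j -> exchange d t v x l ->
  exchange_rhs d j l x y =
  d x t * (d v t)^-1 * exchange_rhs d j l v y + d x v * (d t v)^-1 * exchange_rhs d j l t y.
Proof.
rewrite /exchange /exchange_rhs => -> ->; rewrite !mulrDl !mulrDr !mulrA.
by rewrite addrACA.
Qed.

Lemma exchange_expandr d t v j l x y : exchange d t v j y -> exchange d t v l y ->
  exchange_rhs d j l x y =
  exchange_rhs d j l x t * (d v t)^-1 * d v y + exchange_rhs d j l x v * (d t v)^-1 * d t y.
Proof.
rewrite /exchange /exchange_rhs => -> ->; rewrite !mulrDl !mulrDr !mulrA.
by rewrite addrACA.
Qed.

(* Expanding both ends of [exchange_rhs d j l x y] along [(t, v)] leaves the
   exchange relations of [t] and [v] along [(j, l)], which collapse it. *)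
Lemma exchange_change_pivot d t v j l x y :
  d t t = 0 -> d v v = 0 -> d t v \is a GRing.unit -> d v t \is a GRing.unit ->
  exchange d t v x y -> exchange d t v x j -> exchange d t v x l ->
  exchange d t v j y -> exchange d t v l y ->
  exchange d j l t t -> exchange d j l t v -> exchange d j l v t -> exchange d j l v v ->
  exchange d j l x y.
Proof.
move=> dtt dvv utv uvt xy xj xl jy ly tt tv vt vv.
rewrite /exchange (exchange_expandl y xj xl) (exchange_expandr v jy ly).
rewrite (exchange_expandr t jy ly) -vt -vv -tt -tv dvv dtt !(mul0r, addr0, add0r).
by rewrite !divrr // !mul1r.
Qed.

Lemma eq_divr_swap (x w y u : R) : x \is a GRing.unit -> w \is a GRing.unit ->
  y \is a GRing.unit -> y = x * w^-1 * u -> u * y^-1 = w * x^-1.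
Proof.
move=> ux uw uy yE.
have uE : u = w * x^-1 * y by rewrite yE !mulrA (mulrVK ux) (mulrV uw) mul1r.
by rewrite uE mulrK.
Qed.

Lemma exchange_solve d j l t v : d v v = 0 ->
  d j t \is a GRing.unit -> d t v \is a GRing.unit -> d v t \is a GRing.unit ->
  d t j \is a GRing.unit -> exchange d t v l j -> exchange d j t v v ->
  d l j = (d l v - d l t * (d j t)^-1 * d j v) * (d t v)^-1 * d t j.
Proof.
move=> dvv ujt utv uvt utj lj; rewrite /exchange /exchange_rhs dvv => /esym/eqP.
rewrite addr_eq0 => /eqP vv.
have vj : d v j = - (d v t * (d j t)^-1 * d j v) * (d t v)^-1 * d t j.
  by rewrite -vv mulrK // mulrVK.
by rewrite lj /exchange_rhs vj mulrBl mulrBl addrC !mulNr !mulrN !mulrA mulrVK.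
Qed.

(* When the pivots [(t, v)] and [(j, l)] cross, the relations along [(t, v)]
   and the two triangles at [v] give the relations of [t] along [(j, l)]. *)
Lemma exchange_flip d j l t v : d t t = 0 -> d v v = 0 ->
  d t v \is a GRing.unit -> d v t \is a GRing.unit ->
  d j t \is a GRing.unit -> d l t \is a GRing.unit ->
  d t j \is a GRing.unit -> d t l \is a GRing.unit ->
  d l j \is a GRing.unit -> d j l \is a GRing.unit ->
  exchange d t v j l -> exchange d t v l j -> exchange d j t v v -> exchange d l t v v ->
  exchange d j l t t /\ exchange d j l t v.
Proof.
move=> dtt dvv utv uvt ujt ult utj utl ulj ujl jl lj jvv lvv.
set al := d l v - d l t * (d j t)^-1 * d j v.
set be := d j v - d j t * (d l t)^-1 * d l v.
have ljE : d l j = al * (d t v)^-1 * d t j by apply: exchange_solve.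
have jlE : d j l = be * (d t v)^-1 * d t l by apply: exchange_solve.
have beE : be = - (d j t * (d l t)^-1 * al).
  by rewrite /be /al mulrBr opprB !mulrA mulrVK // mulrV // mul1r addrC.
have ual : al \is a GRing.unit.
  have -> : al = d l j * (d t j)^-1 * d t v by rewrite ljE mulrK // mulrVK.
  by rewrite !unitrMl ?unitrV.
have ube : be \is a GRing.unit by rewrite beE unitrN !unitrMl ?unitrV.
have tjlj : d t j * (d l j)^-1 = d t v * al^-1 by apply: eq_divr_swap.
have tljl : d t l * (d j l)^-1 = d t v * be^-1 by apply: eq_divr_swap.
have beV : be^-1 = - (al^-1 * d l t * (d j t)^-1).
  by rewrite beE invrN invrM ?unitrMl ?unitrV // invrM ?unitrV // invrK !mulrA.
rewrite /exchange /exchange_rhs tjlj tljl beV ?mulrN ?mulNr !mulrA; split.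
  by rewrite dtt mulrVK // addrN.
have -> : d t v / al * d l v - d t v / al * d l t / d j t * d j v = d t v / al * al.
  by rewrite /al mulrBr !mulrA.
by rewrite mulrVK.
Qed.

Lemma exchange_transfer d j l x y : d y y = 0 ->
  d l j \is a GRing.unit -> d l y \is a GRing.unit -> d y l \is a GRing.unit ->
  exchange d y l x j -> exchange d j l y y -> exchange d j l x y.
Proof.
move=> dyy ulj uly uyl xj; rewrite /exchange /exchange_rhs dyy => /esym/eqP.
rewrite addr_eq0 => /eqP yy.
have xyE : d x y * (d l y)^-1 * d l j * (d l j)^-1 * d l y = d x y.
  by rewrite mulrK // mulrVK.
have xlE : d x l * (d y l)^-1 * d y j * (d l j)^-1 * d l y = - (d x l * (d j l)^-1 * d j y).
  by rewrite -(mulrA _ (d y j)) -(mulrA _ (d y j * _)) yy mulrN !mulrA mulrVK.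
by rewrite xj /exchange_rhs !mulrDl xyE xlE addrNK.
Qed.

Lemma exchange_rhs_repivot d t v t' v' x y :
  exchange d t v x t' -> exchange d t v x v' -> exchange d t' v' t y -> exchange d t' v' v y ->
  exchange_rhs d t v x y = exchange_rhs d t' v' x y.
Proof. by move=> xt' xv' ty vy; rewrite (exchange_expandr x ty vy) -xt' -xv'. Qed.

Lemma signed_monomial (a b e : bool) (X Y Z : R) :
  (-1) ^+ a * X * ((-1) ^+ b * Y)^-1 * ((-1) ^+ e * Z) =
  (-1) ^+ (a (+) b (+) e) * (X * Y^-1 * Z).
Proof.
rewrite invr_signM; case: a; case: b; case: e;
  by rewrite /= ?expr0 ?expr1 ?mul1r ?mulN1r ?mulNr ?mulrN ?opprK ?mulNr ?mulrN ?opprK.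
Qed.

Section Signs.
Variables (s : T -> T -> bool) (c d : T -> T -> R).
Hypothesis dE : forall p q, p != q -> d p q = (-1) ^+ s p q * c p q.

Lemma exchange_signed j l x y : x != y -> x != j -> x != l -> y != j -> y != l -> j != l ->
  s x j (+) s l j (+) s l y = s x y -> s x l (+) s j l (+) s j y = s x y ->
  exchange d j l x y <-> exchange c j l x y.
Proof.
move=> xy xj xl yj yl jl sj sl.
have sym (p q : T) : p != q -> q != p by rewrite eq_sym.
rewrite /exchange /exchange_rhs (dE xy) (dE xj) (dE (sym _ _ jl)) (dE (sym _ _ yl)).
rewrite (dE xl) (dE jl) (dE (sym _ _ yj)) !signed_monomial sj sl -mulrDr.
by split => [dxy|->//]; rewrite -[c x y](signrMK (s x y)) dxy signrMK.
Qed.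

Lemma exchange_signed_triangle j l x : d x x = 0 -> x != j -> x != l -> j != l ->
  s x j (+) s l j (+) s l x = ~~ (s x l (+) s j l (+) s j x) ->
  exchange d j l x x <-> c x j * (c l j)^-1 * c l x = c x l * (c j l)^-1 * c j x.
Proof.
move=> dxx xj xl jl sgn.
have sym (p q : T) : p != q -> q != p by rewrite eq_sym.
rewrite /exchange /exchange_rhs dxx (dE xj) (dE (sym _ _ jl)) (dE (sym _ _ xl)) (dE xl) (dE jl).
rewrite (dE (sym _ _ xj)) !signed_monomial sgn signrN mulNr.
split => [|->]; last by rewrite addNr.
rewrite addrC => /esym/eqP; rewrite subr_eq0 => /eqP.
by move/(congr1 ( *%R ((-1) ^+ (s x l (+) s j l (+) s j x)))); rewrite !signrMK.
Qed.

End Signs.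

End Exchange.

Section Gluing.
Variables (R : unitRingType) (n kappa : nat).
Variables (E : {set 'I_n * 'I_n}) (Pa : 'I_kappa.+1 -> {set 'I_n}).
Variable ca : 'I_kappa.+1 -> 'I_n -> 'I_n -> R.
Hypothesis n3 : (2 < n)%N.
Hypothesis dissE : dissection E.
Hypothesis Pa_inj : injective Pa.
Hypothesis cellsE : forall Q, cell E Q <-> exists a, Q = Pa a.
Hypothesis friezes : forall a, frieze (Pa a) (ca a).
Hypothesis ca_diag : forall a b t v, (t, v) \in E -> t \in Pa a -> v \in Pa a ->
  t \in Pa b -> v \in Pa b -> ca a t v = ca b t v.
Implicit Types (a b : 'I_kappa.+1) (i j k l p q t v x y : 'I_n).

Lemma cell_Pa a : cell E (Pa a).
Proof. by apply/cellsE; exists a. Qed.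

Lemma ca_agree a b i j : i \in Pa a -> j \in Pa a -> i \in Pa b -> j \in Pa b ->
  i != j -> ca a i j = ca b i j.
Proof.
move=> ia ja ib jb ij; case: (eqVneq a b) => [-> //|ab].
apply: ca_diag => //; apply: (cells_share_diag dissE (cell_Pa a) (cell_Pa b)) => //.
by apply: contra ab => /eqP /Pa_inj ->.
Qed.

Lemma common_cell i k : i != k -> nsep E [:: i; k] = 0%N ->
  exists a, i \in Pa a /\ k \in Pa a.
Proof.
move=> ik /nsep2_uncrossed unc_ik.
have [Q [/cellsE [a ->] iQ kQ]] := cell_of_uncrossed dissE n3 ik unc_ik.
by exists a.
Qed.

Section Repivot.
Variables (c : 'I_n -> 'I_n -> R) (i k : 'I_n).
Hypothesis c_diag0 : forall x, c x x = 0.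
Hypothesis c_unit : forall t v, (t, v) \in E -> c t v \is a GRing.unit.
Hypothesis exchange_below : forall p q t v, (t, v) \in E -> crossb p q t v ->
  (nsep E [:: p; q] < nsep E [:: i; k])%N -> exchange c t v p q.

Lemma exchange_degenerate_diag t v x y : (t, v) \in E ->
  [|| x == t, x == v, y == t | y == v] -> exchange c t v x y.
Proof. by move=> tvE; apply: exchange_degenerate; rewrite ?c_unit ?(diss_sym dissE tvE). Qed.

Lemma repivot_nested t v t' v' : (t, v) \in E -> (t', v') \in E ->
  cyc4 i t k v -> cyc4 i t' k v' -> (t' == t) || cyc3 t t' k -> (v' == v) || cyc3 k v' v ->
  exchange_rhs c t v i k = exchange_rhs c t' v' i k.
Proof.
move=> tvE t'v'E itkv it'kv' tt' vv'.
have [_ _ tk vk] := nsep2_cross dissE tvE (introT orP (or_introl itkv)).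
have [it' iv' _ _] := nsep2_cross dissE t'v'E (introT orP (or_introl it'kv')).
apply: exchange_rhs_repivot.
- case/orP: tt' => [t't|tt'k]; first by apply: exchange_degenerate_diag; rewrite ?t't ?orbT.
  by apply: (exchange_below tvE _ it'); move: itkv tt'k; cyclic_order.
- case/orP: vv' => [v'v|kv'v]; first by apply: exchange_degenerate_diag; rewrite ?v'v ?orbT.
  by apply: (exchange_below tvE _ iv'); move: itkv kv'v; cyclic_order.
- case/orP: tt' => [t't|tt'k].
    by apply: exchange_degenerate_diag; rewrite // [t == t']eq_sym t't.
  by apply: (exchange_below t'v'E _ tk); move: itkv it'kv' tt'k; cyclic_order.
- case/orP: vv' => [v'v|kv'v].
    by apply: exchange_degenerate_diag; rewrite // [v == v']eq_sym v'v ?orbT.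
  by apply: (exchange_below t'v'E _ vk); move: itkv it'kv' kv'v; cyclic_order.
Qed.

Lemma repivot_oriented t v t' v' : (t, v) \in E -> (t', v') \in E ->
  cyc4 i t k v -> cyc4 i t' k v' ->
  exchange_rhs c t v i k = exchange_rhs c t' v' i k.
Proof.
move=> tvE t'v'E itkv it'kv'.
have : ((t' == t) || cyc3 t t' k) && ((v' == v) || cyc3 k v' v) ||
       ((t == t') || cyc3 t' t k) && ((v == v') || cyc3 k v v').
  by move: itkv it'kv' (diss_nocross dissE tvE t'v'E); cyclic_order.
by case/orP => /andP [tt' vv']; [|symmetry]; apply: repivot_nested.
Qed.

Lemma repivot t v t' v' : (t, v) \in E -> (t', v') \in E ->
  crossb i k t v -> crossb i k t' v' ->
  exchange_rhs c t v i k = exchange_rhs c t' v' i k.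
Proof.
move=> tvE t'v'E /orP [itkv|ivkt] /orP [it'kv'|iv'kt'].
- exact: repivot_oriented.
- by rewrite [RHS]exchange_rhsC; apply: repivot_oriented (diss_sym dissE t'v'E) _ _.
- by rewrite [LHS]exchange_rhsC; apply: repivot_oriented (diss_sym dissE tvE) _ _ _.
- rewrite exchange_rhsC [RHS]exchange_rhsC.
  exact: repivot_oriented (diss_sym dissE tvE) (diss_sym dissE t'v'E) ivkt iv'kt'.
Qed.

End Repivot.

Definition glued_upto (m : nat) (c : 'I_n -> 'I_n -> R) :=
  [/\ forall x, c x x = 0,
      forall a i j, i \in Pa a -> j \in Pa a -> i != j -> c i j = ca a i j,
      forall t v, (t, v) \in E -> c t v \is a GRing.unit &
      forall i k t v, (t, v) \in E -> crossb i k t v -> (nsep E [:: i; k] <= m)%N ->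
        exchange c t v i k].

Definition glue0 i k : R :=
  if i == k then 0 else
  if [pick a | (i \in Pa a) && (k \in Pa a)] is Some a then ca a i k else 0.

Lemma glue0_cell a i j : i \in Pa a -> j \in Pa a -> i != j -> glue0 i j = ca a i j.
Proof.
move=> ia ja ij; rewrite /glue0 (negbTE ij).
by case: pickP => [b /andP [ib jb]|/(_ a)]; [apply: ca_agree | rewrite ia ja].
Qed.

Lemma glued_upto0 : glued_upto 0 glue0.
Proof.
split=> [x|||i k t v tvE ikx]; first by rewrite /glue0 eqxx.
- exact: glue0_cell.
- move=> t v tvE; have tv := diss_neq dissE tvE.
  have [a [ta va]] := common_cell tv (nsep2_diag dissE tvE).
  by rewrite (glue0_cell ta va tv); case: (friezes a) => unit_ca _ _; apply: unit_ca.
- by rewrite leqNgt (nsep2_pos tvE ikx).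
Qed.

Definition glue_step (c : 'I_n -> 'I_n -> R) m i k : R :=
  if nsep E [:: i; k] == m.+1 then
    if [pick e in E | crossb i k e.1 e.2] is Some e then exchange_rhs c e.1 e.2 i k
    else c i k
  else c i k.

Lemma glued_upto_step m c : glued_upto m c -> glued_upto m.+1 (glue_step c m).
Proof.
case=> c_diag0 c_cell c_unit c_exchange.
have old p q : (nsep E [:: p; q] <= m)%N -> glue_step c m p q = c p q.
  by rewrite /glue_step => pq; case: eqP => // pqE; move: pq; rewrite pqE ltnn.
have old0 p q : nsep E [:: p; q] = 0%N -> glue_step c m p q = c p q.
  by move=> pq; rewrite old ?pq.
split=> [x|a i j ia ja ij|t v tvE|i k t v tvE ikx ikm].
- by rewrite old0 ?nsep2_refl.
- by rewrite old0; [apply: c_cell | exact: (nsep2_cell dissE (cell_Pa a) ia ja)].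
- by rewrite old0; [apply: c_unit | exact: (nsep2_diag dissE tvE)].
have [it iv tk vk] := nsep2_cross dissE tvE ikx.
have below p q : (nsep E [:: p; q] < nsep E [:: i; k])%N -> glue_step c m p q = c p q.
  by move=> pq; apply: old; rewrite -ltnS (leq_trans pq ikm).
have tv0 := nsep2_diag dissE tvE; have vt0 := nsep2_diag dissE (diss_sym dissE tvE).
rewrite /exchange /exchange_rhs (below _ _ it) (below _ _ iv) (below _ _ tk) (below _ _ vk).
rewrite (old0 _ _ tv0) (old0 _ _ vt0).
have [ik_le_m|] := leqP (nsep E [:: i; k]) m.
  by rewrite old //; apply: c_exchange.
move=> m_lt_ik; have ikE : nsep E [:: i; k] = m.+1 by apply/eqP; rewrite eqn_leq ikm.
rewrite /glue_step -ikE eqxx; case: pickP => [[t' v'] /andP [t'v'E /= ikx']|/(_ (t, v))].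
  apply: (repivot c_diag0 c_unit) => // p q a b abE pqx pqi.
  by apply: c_exchange; rewrite // -ltnS -ikE.
by rewrite tvE ikx.
Qed.

Fixpoint glue m : 'I_n -> 'I_n -> R :=
  if m is m'.+1 then glue_step (glue m') m' else glue0.

Lemma glued_upto_glue m : glued_upto m (glue m).
Proof. by elim: m => [|m IHm]; [exact: glued_upto0 | exact: glued_upto_step]. Qed.

Lemma glued_glue : glued E Pa ca (glue #|E|).
Proof.
case: (glued_upto_glue #|E|) => _ g_cell g_unit g_exchange.
by split=> //; split=> // i k t v tvE _ ikx; apply: g_exchange (nsep_le E _).
Qed.

Lemma glued_unique c1 c2 : glued E Pa ca c1 -> glued E Pa ca c2 ->
  forall i j, i != j -> c1 i j = c2 i j.
Proof.
case=> cell1 [_ exchange1] [cell2 [_ exchange2]] i j.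
move: {-1}(nsep E [:: i; j]) (erefl (nsep E [:: i; j])) => m.
elim/ltn_ind: m i j => m IHm i j mE ij.
have [ij0|] := posnP (nsep E [:: i; j]).
  by have [a [ia ja]] := common_cell ij ij0; rewrite (cell1 a) ?(cell2 a).
case/card_gt0P => -[t v]; rewrite inE separates2 => /andP [tvE ijx].
have [it iv tj vj] := nsep2_cross dissE tvE ijx.
have below p q : (nsep E [:: p; q] < nsep E [:: i; j])%N -> p != q -> c1 p q = c2 p q.
  by move=> pq; apply: IHm erefl; rewrite -mE.
have vtE := diss_sym dissE tvE.
have diag_below p q : (p, q) \in E -> (nsep E [:: p; q] < nsep E [:: i; j])%N.
  by move=> pqE; rewrite (nsep2_diag dissE pqE) (nsep2_pos tvE ijx).
have /and3P [_ it' /and3P [iv' jt /andP [jv tv]]] := crossb_distinct ijx.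
rewrite (exchange1 _ _ _ _ tvE vtE ijx) (exchange2 _ _ _ _ tvE vtE ijx) /exchange_rhs.
rewrite (below _ _ it it') (below _ _ iv iv').
rewrite (below _ _ tj) 1?eq_sym // (below _ _ vj) 1?eq_sym //.
by rewrite (below _ _ (diag_below _ _ tvE) tv) (below _ _ (diag_below _ _ vtE)) 1?eq_sym.
Qed.

End Gluing.

Section GluedFrieze.
Variables (R : unitRingType) (n kappa : nat).
Variables (E : {set 'I_n * 'I_n}) (Pa : 'I_kappa.+1 -> {set 'I_n}).
Variable ca : 'I_kappa.+1 -> 'I_n -> 'I_n -> R.
Hypothesis dissE : dissection E.
Hypothesis cellsE : forall Q, cell E Q <-> exists a, Q = Pa a.
Hypothesis friezes : forall a, frieze (Pa a) (ca a).
Variable c : 'I_n -> 'I_n -> R.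
Hypothesis glued_c : glued E Pa ca c.
Hypothesis c_unit : forall i j, i != j -> c i j \is a GRing.unit.
Implicit Types (a b i j k l p q t v x y : 'I_n).

(* With the sign [(-1)^[q < p]] the triangle and crossing relations of [c]
   all become exchange relations. *)
Definition csigned p q : R := if p == q then 0 else (-1) ^+ (q < p)%N * c p q.

Lemma csignedE p q : p != q -> csigned p q = (-1) ^+ (q < p)%N * c p q.
Proof. by rewrite /csigned => /negbTE ->. Qed.

Lemma csigned_diag0 p : csigned p p = 0.
Proof. by rewrite /csigned eqxx. Qed.

Lemma csigned_unit p q : p != q -> csigned p q \is a GRing.unit.
Proof. by move=> pq; rewrite csignedE // unitrMr ?c_unit // unitrX ?unitrN1. Qed.

Lemma exchange_csigned_cross x y j l : crossb x y j l ->
  exchange csigned j l x y <-> exchange c j l x y.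
Proof.
move=> xyx; have /and3P [xy xj /and3P [xl yj /andP [yl jl]]] := crossb_distinct xyx.
apply: (exchange_signed csignedE) => //; apply/eqP;
  by move: xyx; cyclic_order.
Qed.

Lemma exchange_csigned_triangle x j l : x != j -> x != l -> j != l ->
  exchange csigned j l x x <-> c x j * (c l j)^-1 * c l x = c x l * (c j l)^-1 * c j x.
Proof.
move=> xj xl jl; apply: (exchange_signed_triangle csignedE) => //.
  exact: csigned_diag0.
by apply/eqP; move: xj xl jl; cyclic_order.
Qed.

Lemma frieze_glued_cell (a : 'I_kappa.+1) : frieze (Pa a) c.
Proof.
case: glued_c => c_cell _; case: (friezes a) => unit_a tri_a cross_a.
have ca_c p q : p \in Pa a -> q \in Pa a -> p != q -> ca a p q = c p q.
  by move=> pa qa pq; rewrite (c_cell a).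
have sym p q : p != q -> q != p by rewrite eq_sym.
split=> [p q pa qa pq|p q r pa qa ra pq qr pr|p q r u pa qa ra ua pqx].
- by rewrite -ca_c ?unit_a.
- have qp := sym _ _ pq; have rq := sym _ _ qr; have rp := sym _ _ pr.
  by move: (tri_a p q r pa qa ra pq qr pr); rewrite !ca_c // => ->.
have /and3P [pr pq /and3P [pu rq /andP [ru qu]]] := crossb_distinct pqx.
have qr := sym _ _ rq; have ur := sym _ _ ru; have uq := sym _ _ qu.
by move: (cross_a p q r u pa qa ra ua pqx); rewrite !ca_c // => ->.
Qed.

Lemma exchange_in_frieze Q x y j l : frieze Q c ->
  x \in Q -> y \in Q -> j \in Q -> l \in Q ->
  x != j -> x != l -> y != j -> y != l -> j != l -> exchange csigned j l x y.
Proof.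
case=> _ tri cross xQ yQ jQ lQ xj xl yj yl jl.
have triangle p q r : p \in Q -> q \in Q -> r \in Q -> p != q -> p != r -> q != r ->
    exchange csigned q r p p.
  by move=> pQ qQ rQ pq pr qr; apply/exchange_csigned_triangle => //; apply: tri.
have crossing p q r u : p \in Q -> q \in Q -> r \in Q -> u \in Q -> crossb p q r u ->
    exchange csigned r u p q.
  by move=> pQ qQ rQ uQ pqx; apply/exchange_csigned_cross => //; apply: cross.
have [<-|xy] := eqVneq x y; first exact: triangle.
have : [|| crossb x y j l, crossb x j y l | crossb x l y j].
  by move: xy xj xl yj yl jl; cyclic_order.
have [lj ly jy] : [/\ l != j, l != y & j != y] by split; rewrite eq_sym.
case/or3P => [xyx|xjx|xlx]; first exact: crossing.
  exact: (exchange_transfer (csigned_diag0 y) (csigned_unit lj) (csigned_unit ly)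
    (csigned_unit yl) (crossing _ _ _ _ xQ jQ yQ lQ xjx) (triangle _ _ _ yQ jQ lQ yj yl jl)).
apply/exchangeC; exact: (exchange_transfer (csigned_diag0 y) (csigned_unit jl)
  (csigned_unit jy) (csigned_unit yj) (crossing _ _ _ _ xQ lQ yQ jQ xlx)
  (triangle _ _ _ yQ lQ jQ yl yj lj)).
Qed.

Lemma exchange_diag t v p q : (t, v) \in E -> crossb p q t v -> exchange csigned t v p q.
Proof.
move=> tvE pqx; apply/exchange_csigned_cross => //.
by case: glued_c => _ [_ weak]; apply: weak (diss_sym dissE tvE) pqx.
Qed.

Lemma exchange_unseparated x y j l :
  (forall e, e \in E -> ~~ separates [:: x; y; j; l] e) -> j != l -> exchange csigned j l x y.
Proof.
move=> unsep jl.
have [degenerate|] := boolP [|| x == j, x == l, y == j | y == l].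
  have lj : l != j by rewrite eq_sym.
  exact: (exchange_degenerate (csigned_diag0 j) (csigned_diag0 l) (csigned_unit jl)
    (csigned_unit lj) degenerate).
rewrite !negb_or => /and4P [xj xl yj yl].
pose X := x |: (y |: (j |: [set l])).
have X3 : (2 < #|X|)%N.
  apply: leq_trans (subset_leq_card (_ : x |: (j |: [set l]) \subset X)).
    by rewrite !cardsU1 cards1 !inE (negbTE xj) (negbTE xl) (negbTE jl).
  by apply/subsetP => u; rewrite !inE => /or3P [] ->; rewrite ?orbT.
have X_unsep p q : p \in X -> q \in X -> uncrossed E p q.
  move=> pX qX [a b] abE; apply: contraNN (unsep _ abE) => pqx.
  by apply/separatesP; exists p, q; move: pX qX; rewrite !inE.
have [a Pa_a] := (cellsE (visible E X)).1 (visible_cell dissE X3 X_unsep).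
have inPa u : u \in X -> u \in Pa a by rewrite -Pa_a; apply/subsetP/sub_visible.
by apply: (exchange_in_frieze (frieze_glued_cell a)); rewrite // inPa // !inE eqxx ?orbT.
Qed.

Section Step.
Variables x y j l t v : 'I_n.
Hypothesis tvE : (t, v) \in E.
Hypothesis jl : j != l.
Hypothesis tv_sep : separates [:: x; y; j; l] (t, v).
Hypothesis exchange_below : forall p q a b,
  (nsep E [:: p; q; a; b] < nsep E [:: x; y; j; l])%N -> a != b -> exchange csigned a b p q.

Let pts := [:: t, v & [:: x; y; j; l]].

Lemma pts_tvxy : [/\ t \in pts, v \in pts, x \in pts & y \in pts].
Proof. by rewrite !inE !eqxx !orbT. Qed.

Lemma pts_jl : j \in pts /\ l \in pts.
Proof. by rewrite !inE !eqxx !orbT. Qed.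

Lemma exchange_tv_unseparated p q a b : p \in pts -> q \in pts -> a \in pts -> b \in pts ->
  ~~ separates [:: p; q; a; b] (t, v) -> a != b -> exchange csigned a b p q.
Proof.
move=> pP qP aP bP unsep ab; apply: exchange_below ab.
apply: (nsep_lt dissE tvE tv_sep unsep) => u; rewrite !in_cons in_nil orbF.
by case/or4P => /eqP ->.
Qed.

Lemma exchange_tv p q : p \in pts -> q \in pts -> exchange csigned t v p q.
Proof.
have [tP vP _ _] := pts_tvxy.
move=> pP qP; have [pqx|pq_unx] := boolP (crossb p q t v); first exact: exchange_diag.
apply: exchange_tv_unseparated (diss_neq dissE tvE) => //.
by rewrite /separates /=; move: pq_unx; cyclic_order.
Qed.

Lemma exchange_tv_triangles a : a \in pts -> a != t -> a != v ->
  exchange csigned a t v v /\ exchange csigned a v t t.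
Proof.
have [tP vP _ _] := pts_tvxy.
move=> aP a_t a_v; split; apply: exchange_tv_unseparated => //;
  by rewrite /separates /=; cyclic_order.
Qed.

Lemma exchange_jl_tv :
  [/\ exchange csigned j l t t, exchange csigned j l t v,
      exchange csigned j l v t & exchange csigned j l v v].
Proof.
have [tP vP _ _] := pts_tvxy; have [jP lP] := pts_jl.
have [jlx|jl_unx] := boolP (crossb j l t v); last first.
  split; apply: exchange_tv_unseparated => //;
    by rewrite /separates /=; move: jl_unx; cyclic_order.
have sym (p q : 'I_n) : p != q -> q != p by rewrite eq_sym.
have vtE := diss_sym dissE tvE.
have /and3P [_ jt /and3P [jv lt /andP [lv tv]]] := crossb_distinct jlx.
have [jvv jtt] := exchange_tv_triangles jP jt jv.
have [lvv ltt] := exchange_tv_triangles lP lt lv.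
have [ljx jlx' ljx'] : [/\ crossb l j t v, crossb j l v t & crossb l j v t].
  by split; move: jlx; cyclic_order.
have [tt_ tv_] := exchange_flip (csigned_diag0 t) (csigned_diag0 v)
  (csigned_unit tv) (csigned_unit (sym _ _ tv)) (csigned_unit jt) (csigned_unit lt)
  (csigned_unit (sym _ _ jt)) (csigned_unit (sym _ _ lt)) (csigned_unit (sym _ _ jl))
  (csigned_unit jl) (exchange_diag tvE jlx) (exchange_diag tvE ljx) jvv lvv.
have [vv_ vt_] := exchange_flip (csigned_diag0 v) (csigned_diag0 t)
  (csigned_unit (sym _ _ tv)) (csigned_unit tv) (csigned_unit jv) (csigned_unit lv)
  (csigned_unit (sym _ _ jv)) (csigned_unit (sym _ _ lv)) (csigned_unit (sym _ _ jl))
  (csigned_unit jl) (exchange_diag vtE jlx') (exchange_diag vtE ljx') jtt ltt.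
by split.
Qed.

Lemma exchange_step : exchange csigned j l x y.
Proof.
have [tP vP xP yP] := pts_tvxy; have [jP lP] := pts_jl.
have [tt tv vt vv] := exchange_jl_tv; have tv_ne := diss_neq dissE tvE.
have vt_ne : v != t by rewrite eq_sym.
exact: (exchange_change_pivot (csigned_diag0 t) (csigned_diag0 v) (csigned_unit tv_ne)
  (csigned_unit vt_ne) (exchange_tv xP yP) (exchange_tv xP jP) (exchange_tv xP lP)
  (exchange_tv jP yP) (exchange_tv lP yP) tt tv vt vv).
Qed.

End Step.

Lemma exchange_csigned x y j l : j != l -> exchange csigned j l x y.
Proof.
move: {-1}(nsep E [:: x; y; j; l]) (erefl (nsep E [:: x; y; j; l])) => m.
elim/ltn_ind: m x y j l => m IHm x y j l mE jl.
have [/exists_inP [[t v] tvE tv_sep]|unsep] :=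
  boolP [exists e in E, separates [:: x; y; j; l] e].
  apply: (exchange_step tvE jl tv_sep) => p q a b lt ab.
  by apply: (IHm _ _ p q a b erefl ab); rewrite -mE.
apply: exchange_unseparated jl => e eE; apply: contraNN unsep => sep.
by apply/exists_inP; exists e.
Qed.

Lemma frieze_glued : frieze [set: 'I_n] c.
Proof.
split=> [i j _ _|i j k _ _ _ ij jk ik|i j k l _ _ _ _ ikx]; first exact: c_unit.
  by apply/(exchange_csigned_triangle ij ik jk)/exchange_csigned.
have /and3P [_ _ /and3P [_ _ /andP [_ jl]]] := crossb_distinct ikx.
by apply/(exchange_csigned_cross ikx)/exchange_csigned.
Qed.

End GluedFrieze.

Theorem theoremD (R : unitRingType) (n kappa : nat)
  (E : {set 'I_n * 'I_n})
  (Pa : 'I_kappa.+1 -> {set 'I_n})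
  (ca : 'I_kappa.+1 -> 'I_n -> 'I_n -> R) :
  (3 <= n)%N ->
  dissection E ->
  #|E| = (2 * kappa)%N ->
  injective Pa ->
  (forall Q : {set 'I_n}, cell E Q <-> exists a, Q = Pa a) ->
  (forall a, frieze (Pa a) (ca a)) ->
  (forall a b t v, (t, v) \in E -> t \in Pa a -> v \in Pa a ->
     t \in Pa b -> v \in Pa b -> ca a t v = ca b t v) ->
  (exists c : 'I_n -> 'I_n -> R, glued E Pa ca c) /\
  (forall c1 c2 : 'I_n -> 'I_n -> R, glued E Pa ca c1 -> glued E Pa ca c2 ->
     forall i j, i != j -> c1 i j = c2 i j) /\
  (forall c : 'I_n -> 'I_n -> R, glued E Pa ca c ->
     (forall i j, i != j -> c i j \is a GRing.unit) ->
     frieze [set: 'I_n] c).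
Proof.
move=> n3 dissE _ Pa_inj cellsE friezes ca_diag.
split.
  by exists (glue E Pa ca #|E|); apply: glued_glue n3 dissE Pa_inj cellsE friezes ca_diag.
split; first exact: glued_unique n3 dissE cellsE.
move=> c glued_c c_unit; exact (frieze_glued dissE cellsE friezes glued_c c_unit).
Qed.
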